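(* Let $M$ be an $R$-module. (a) If $M$ is a Hopfian comultiplication $R$-module satisfying the dual of Property $\mathcal{A}$, then $M$ satisfies Property $\mathcal{A}$. (b) If $M$ is a co-Hopfian multiplication $R$-module satisfying Property $\mathcal{A}$, then $M$ satisfies the dual of Property $\mathcal{A}$.
   Context: All rings are commutative with identity. For an $R$-module $M$, $W_R(M)=\{r\in R : rM\neq M\}$ and $Z_R(M)=\{r\in R: rm=0 \text{ for some } 0\neq m\in M\}$. An $R$-module $M$ satisfies the dual of Property $\mathcal{A}$ if for every finitely generated ideal $I$ of $R$ with $I\subseteq W_R(M)$ we have $IM\neq M$. $M$ satisfies Property $\mathcal{A}$ if for every finitely generated ideal $I$ of $R$ with $I\subseteq Z_R(M)$ we have $(0:_M I)\neq 0$. $M$ is Hopfian (resp. co-Hopfian) if every surjective (resp. injective) endomorphism of $M$ is an isomorphism. $M$ is a multiplication module if every submodule $N$ equals $IM$ for some ideal $I$; $M$ is a comultiplication module if every submodule $N$ equals $(0:_M I)$ for some ideal $I$ of $R$. *)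

From HB Require Import structures.
From mathcomp Require Import all_boot all_order all_algebra.
Set Implicit Arguments. Unset Strict Implicit. Unset Printing Implicit Defensive.
Import GRing.Theory.
Local Open Scope ring_scope.

Section ModuleDefs.
Variables (R : comPzRingType) (M : lmodType R).

Definition is_ideal (I : R -> Prop) : Prop :=
  [/\ I 0, (forall x y, I x -> I y -> I (x + y)) & (forall r x, I x -> I (r * x))].

Definition is_submodule (N : M -> Prop) : Prop :=
  [/\ N 0, (forall x y, N x -> N y -> N (x + y)) & (forall r x, N x -> N (r *: x))].

Definition fg_ideal (I : R -> Prop) : Prop :=
  exists s : seq R, forall x,
    I x <-> exists c : 'I_(size s) -> R, x = \sum_(i < size s) c i * s`_i.

Definition ideal_mod (I : R -> Prop) : M -> Prop :=
  fun x => exists n (r : 'I_n -> R) (m : 'I_n -> M),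
    (forall i, I (r i)) /\ x = \sum_(i < n) r i *: m i.

Definition annM (I : R -> Prop) : M -> Prop :=
  fun x => forall r, I r -> r *: x = 0.

Definition W_set : R -> Prop := fun r => ~ (forall x : M, exists m, x = r *: m).

Definition Z_set : R -> Prop := fun r => exists m : M, m <> 0 /\ r *: m = 0.

Definition propA : Prop :=
  forall I, fg_ideal I -> (forall r, I r -> Z_set r) ->
    exists m : M, m <> 0 /\ annM I m.

Definition dual_propA : Prop :=
  forall I, fg_ideal I -> (forall r, I r -> W_set r) ->
    ~ (forall x : M, ideal_mod I x).

Definition hopfian : Prop :=
  forall f : {linear M -> M}, (forall y, exists x, f x = y) -> bijective f.

Definition cohopfian : Prop :=
  forall f : {linear M -> M}, injective f -> bijective f.

Definition multiplication_module : Prop :=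
  forall N : M -> Prop, is_submodule N ->
    exists I, is_ideal I /\ forall x, N x <-> ideal_mod I x.

Definition comultiplication_module : Prop :=
  forall N : M -> Prop, is_submodule N ->
    exists I, is_ideal I /\ forall x, N x <-> annM I x.

End ModuleDefs.

(** Both statements reduce to the sets [Z_R(M)] and [W_R(M)] and to the
    vanishing of [IM] versus [(0 :_M I)].  Multiplication by [r] is an
    endomorphism of [M]: if it is onto, Hopficity makes it injective, so
    [Z_R(M) ⊆ W_R(M)]; if it is injective, co-Hopficity makes it onto, so
    [W_R(M) ⊆ Z_R(M)].  In a comultiplication module write [IM = (0 :_M J)];
    then [i (j y) = j (i y) = 0], so [(0 :_M I) = 0] forces [JM = 0] and
    [IM = M].  Dually, in a multiplication module write [Rm = JM]; then
    [IM = M] gives [m ∈ JIM = IJM ⊆ I(Rm) = 0] whenever [Im = 0]. *)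

From mathcomp Require Import all_boot all_order all_algebra.
From Stdlib Require Import Classical.
Set Implicit Arguments. Unset Strict Implicit. Unset Printing Implicit Defensive.
Import GRing.Theory.
Local Open Scope ring_scope.

Section Modules.
Variables (R : comPzRingType) (M : lmodType R).
Implicit Types (I : R -> Prop) (r : R) (x m : M).

Lemma hopfian_Z_sub_W : hopfian M -> forall r, Z_set M r -> W_set M r.
Proof.
move=> hopM r [m [m_neq0 rm0]] rM_full.
have /hopM /bij_inj scale_inj : forall y, exists x, (r \*: idfun) x = y.
  by move=> y; have [x ->] := rM_full y; exists x.
by apply: m_neq0; apply: scale_inj; rewrite /= rm0 scaler0.
Qed.

Lemma cohopfian_W_sub_Z : cohopfian M -> forall r, W_set M r -> Z_set M r.
Proof.
move=> cohopM r rM_proper; apply: NNPP => r_nonZ; apply: rM_proper.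
have scale_inj : injective (r \*: idfun : {linear M -> M}).
  move=> x y /= rxy; apply: NNPP => x_neq_y; apply: r_nonZ.
  exists (x - y); split; first by apply/eqP; rewrite subr_eq0; apply/eqP.
  by rewrite scalerBr rxy subrr.
have [g _ gK] := cohopM _ scale_inj.
by move=> x; exists (g x); rewrite -[RHS]/((r \*: idfun) (g x)) gK.
Qed.

Lemma fg_idealM I : fg_ideal I -> forall r s, I s -> I (r * s).
Proof.
case=> g Ig r s /Ig [c ->]; apply/Ig; exists (fun i => r * c i).
by rewrite mulr_sumr; apply: eq_bigr => i _; rewrite mulrA.
Qed.

Lemma ideal_mod_scale I r x : I r -> ideal_mod (M:=M) I (r *: x).
Proof. by move=> Ir; exists 1%N, (fun=> r), (fun=> x); rewrite big_ord1. Qed.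

Lemma ideal_mod_submodule I :
  (forall r s, I s -> I (r * s)) -> is_submodule (ideal_mod (M:=M) I).
Proof.
move=> IM; split.
- by exists 0%N, (fun=> 0), (fun=> 0); split; [case | rewrite big_ord0].
- move=> _ _ [n1 [r1 [m1 [I1 ->]]]] [n2 [r2 [m2 [I2 ->]]]].
  exists (n1 + n2)%N,
    (fun i => match split i with inl j => r1 j | inr k => r2 k end),
    (fun i => match split i with inl j => m1 j | inr k => m2 k end).
  split; first by move=> i; case: (split i).
  rewrite big_split_ord /=; congr (_ + _); apply: eq_bigr => i _.
    by rewrite -[lshift _ _]/(unsplit (inl i)) unsplitK.
  by rewrite -[rshift _ _]/(unsplit (inr i)) unsplitK.
- move=> r _ [n [s [m [Is ->]]]]; exists n, (fun i => r * s i), m.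
  split=> [i|]; first exact: IM.
  by rewrite scaler_sumr; apply: eq_bigr => i _; rewrite scalerA.
Qed.

Lemma cyclic_submodule m : is_submodule (fun x : M => exists c, x = c *: m).
Proof.
split; first by exists 0; rewrite scale0r.
- by move=> _ _ [c ->] [d ->]; exists (c + d); rewrite scalerDl.
- by move=> r _ [c ->]; exists (r * c); rewrite scalerA.
Qed.

Lemma scalerC r s x : r *: (s *: x) = s *: (r *: x).
Proof. by rewrite !scalerA mulrC. Qed.

Lemma comultiplication_annM0_ideal_modT I :
  comultiplication_module M -> (forall r s, I s -> I (r * s)) ->
  (forall m, annM I m -> m = 0) -> forall x, ideal_mod (M:=M) I x.
Proof.
move=> comulM IM annI0.
have [J [_ IM_annJ]] := comulM _ (ideal_mod_submodule IM).
move=> x; apply/IM_annJ => j Jj; apply: annI0 => i Ii.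
by rewrite scalerC; apply: (iffLR (IM_annJ _) (ideal_mod_scale x Ii)).
Qed.

Lemma multiplication_ideal_modT_annM0 I m :
  multiplication_module M -> (forall x, ideal_mod (M:=M) I x) -> annM I m -> m = 0.
Proof.
move=> mulM IM_full Im0.
have [J [_ Rm_JM]] := mulM _ (cyclic_submodule m).
have [n [j [y [Jj ->]]]] : ideal_mod (M:=M) J m by apply/Rm_JM; exists 1; rewrite scale1r.
apply: big1 => k _; have [n' [i [z [Ii ->]]]] := IM_full (y k).
rewrite scaler_sumr; apply: big1 => l _; rewrite scalerC.
have /Rm_JM [c ->] := ideal_mod_scale (z l) (Jj k).
by rewrite scalerC Im0 ?scaler0.
Qed.

End Modules.

Theorem proposition2p8 (R : comPzRingType) (M : lmodType R) :
  (hopfian M -> comultiplication_module M -> dual_propA M -> propA M) /\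
  (cohopfian M -> multiplication_module M -> propA M -> dual_propA M).
Proof.
split.
- move=> hopM comulM dualA I fgI I_sub_Z; apply: NNPP => annI_trivial.
  apply: (dualA I fgI) => [r /I_sub_Z|]; first exact: hopfian_Z_sub_W.
  apply: comultiplication_annM0_ideal_modT => //; first exact: fg_idealM.
  by move=> m annIm; apply: NNPP => m_neq0; apply: annI_trivial; exists m.
- move=> cohopM mulM propAM I fgI I_sub_W IM_full.
  have I_sub_Z r : I r -> Z_set M r by move/I_sub_W; apply: cohopfian_W_sub_Z.
  have [m [m_neq0 annIm]] := propAM I fgI I_sub_Z.
  exact/m_neq0/(multiplication_ideal_modT_annM0 mulM IM_full annIm).
Qed.
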